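(* Let $G$ be a finite group such that the cyclic graph $\Delta(G)$ is connected and $\mathrm{diam}(\Delta(G))>6$. Then the center $Z(G)$ is trivial.
   Context: For a finite group $G$, the cyclic graph $\Delta(G)$ has vertex set $G^{\#}=G\setminus\{1\}$, and distinct vertices $x,y$ are adjacent if and only if the subgroup $\langle x,y\rangle$ is cyclic. The diameter is the maximum graph distance between two vertices. *)

From mathcomp Require Import all_boot all_fingroup all_solvable center.
Set Implicit Arguments. Unset Strict Implicit. Unset Printing Implicit Defensive.
Local Open Scope group_scope.

Definition cyc_adj (gT : finGroupType) (G : {set gT}) : rel gT :=
  fun x y => [&& x \in G^#, y \in G^#, x != y & cyclic <<[set x; y]>>].

Definition cyc_dist_le (gT : finGroupType) (G : {set gT}) (n : nat) (x y : gT) : Prop :=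
  exists p : seq gT, [/\ path (cyc_adj G) x p, last x p = y & size p <= n]%N.

Definition cyc_graph_connected (gT : finGroupType) (G : {set gT}) : Prop :=
  forall x y, x \in G^# -> y \in G^# -> exists n, cyc_dist_le G n x y.

Definition cyc_diam_gt (gT : finGroupType) (G : {set gT}) (n : nat) : Prop :=
  exists x y, [/\ x \in G^#, y \in G^# & ~ cyc_dist_le G n x y].

From mathcomp Require Import all_boot all_fingroup all_solvable center.

(* If Z(G) is nontrivial it contains an element z of some prime order p, and
   every vertex t is at distance at most 3 from z.  When p does not divide
   #[t], the element t z generates <t> * <z>, so t is adjacent to z.
   Otherwise pick w of order p in <t> and follow a walk from w to z: since a
   cyclic group has a unique subgroup of order p, <w> stays inside the
   cyclic subgroups generated by the successive vertices as long as their
   orders are divisible by p, and the first vertex of order prime to p is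
   adjacent to both w and z.  Hence any two vertices are at distance <= 6. *)

Set Implicit Arguments. Unset Strict Implicit. Unset Printing Implicit Defensive.
Local Open Scope group_scope.

Section CyclicGraph.

Variables (gT : finGroupType) (G : {group gT}).

Lemma cyc_dist_le_cat m n x y z :
  cyc_dist_le G m x y -> cyc_dist_le G n y z -> cyc_dist_le G (m + n) x z.
Proof.
move=> [p [pp lp sp]] [q [pq lq sq]]; exists (p ++ q); split.
- by rewrite cat_path pp lp.
- by rewrite last_cat lp.
- by rewrite size_cat leq_add.
Qed.

Lemma cyc_dist_le_widen m n x y :
  (m <= n)%N -> cyc_dist_le G m x y -> cyc_dist_le G n x y.
Proof. by move=> le_mn [p [pp lp sp]]; exists p; split=> //; apply: leq_trans le_mn. Qed.

Lemma cyc_adj_sym : symmetric (cyc_adj G).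
Proof. by move=> u v; rewrite /cyc_adj setUC eq_sym; do !bool_congr. Qed.

Lemma cyc_dist_le_sym n x y : cyc_dist_le G n x y -> cyc_dist_le G n y x.
Proof.
move=> [p [pp <- sp]]; exists (rev (belast x p)); split.
- by rewrite rev_path (eq_path (e' := cyc_adj G)) // => u v; apply: cyc_adj_sym.
- by case: p {pp sp} => //= a p; rewrite rev_cons last_rcons.
- by rewrite size_rev size_belast.
Qed.

Lemma cyc_dist_le1_cyclic (C : {group gT}) u v :
  cyclic C -> u \in C -> v \in C -> u \in G^# -> v \in G^# ->
  cyc_dist_le G 1 u v.
Proof.
move=> cycC uC vC uG vG; have [<-|neq_uv] := eqVneq u v; first by exists [::].
exists [:: v]; split=> //=; rewrite andbT /cyc_adj uG vG neq_uv /=.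
by apply: cyclicS cycC; rewrite gen_subG; apply/subsetP=> t /set2P[]->.
Qed.

Lemma cyc_dist_le1_coprime a b :
  a \in G^# -> b \in G^# -> commute a b -> coprime #[a] #[b] ->
  cyc_dist_le G 1 a b.
Proof.
move=> aG bG cab co_ab; apply: (@cyc_dist_le1_cyclic <[a * b]>%G) => //=.
- exact: cycle_cyclic.
- by rewrite cycleM // -{1}[a]mulg1 mem_mulg ?cycle_id.
- by rewrite cycleM // -{1}[b]mul1g mem_mulg ?cycle_id.
Qed.

Section CentralElementOfPrimeOrder.

Variables (p : nat) (z : gT).
Hypotheses (p_pr : prime p) (zZ : z \in 'Z(G)) (oz : #[z] = p).

Let zG : z \in G.
Proof. exact: subsetP (center_sub G) z zZ. Qed.

Lemma central_prime_nontrivial : z \in G^#.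
Proof. by rewrite !inE zG andbT -order_gt1 oz prime_gt1. Qed.

Lemma cyc_dist_le1_central a :
  a \in G^# -> ~~ (p %| #[a])%N -> cyc_dist_le G 1 a z.
Proof.
move=> aG ndv_pa; apply: cyc_dist_le1_coprime => //.
- exact: central_prime_nontrivial.
- by case/centerP: zZ => _ cGz; apply/commute_sym/cGz; case/setD1P: aG.
- by rewrite oz coprime_sym prime_coprime.
Qed.

Lemma cyc_dist_le2_along_walk w s a :
  w \in G^# -> #[w] = p -> w \in <[a]> ->
  path (cyc_adj G) a s -> last a s = z -> cyc_dist_le G 2 w z.
Proof.
move=> wG ow; elim: s a => [|b s IHs] a /= wa.
  move=> _ a_z; rewrite a_z in wa; apply: cyc_dist_le_widen (_ : 1 <= 2)%N _ => //.
  apply: (@cyc_dist_le1_cyclic <[z]>%G); rewrite ?cycle_cyclic ?cycle_id //.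
  exact: central_prime_nontrivial.
case/andP=> adj_ab walk_b last_b.
case/and4P: adj_ab => _ bG _ cycC; set C := <<[set a; b]>>%G in cycC.
have aC : a \in C by rewrite mem_gen ?set21.
have bC : b \in C by rewrite mem_gen ?set22.
have wC : w \in C by apply: subsetP wa; rewrite cycle_subG.
have [dv_pb | ndv_pb] := boolP (p %| #[b])%N.
  apply: IHs walk_b last_b; rewrite -cycle_subG -(cardSg_cyclic cycC) ?cycle_subG //.
  by rewrite -!orderE ow.
apply: (cyc_dist_le_cat (m := 1) (y := b)); last exact: cyc_dist_le1_central.
exact: cyc_dist_le1_cyclic cycC wC bC wG bG.
Qed.

Hypothesis connG : cyc_graph_connected G.

Lemma cyc_dist_le2_central w : w \in G^# -> #[w] = p -> cyc_dist_le G 2 w z.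
Proof.
move=> wG ow; have [_ [s [walk_s last_s _]]] := connG wG central_prime_nontrivial.
exact: cyc_dist_le2_along_walk wG ow (cycle_id w) walk_s last_s.
Qed.

Lemma cyc_dist_le3_central t : t \in G^# -> cyc_dist_le G 3 t z.
Proof.
move=> tG; have [dv_pt | ndv_pt] := boolP (p %| #[t])%N; last first.
  by apply: cyc_dist_le_widen (_ : 1 <= 3)%N _ => //; apply: cyc_dist_le1_central.
have [w wt ow] := Cauchy p_pr (dv_pt : p %| #|<[t]>|)%N.
have wG : w \in G^#.
  rewrite !inE -order_gt1 ow prime_gt1 //=.
  by apply: subsetP wt; rewrite cycle_subG; case/setD1P: tG.
apply: (cyc_dist_le_cat (m := 1) (y := w)); last exact: cyc_dist_le2_central.
by apply: (@cyc_dist_le1_cyclic <[t]>%G); rewrite ?cycle_cyclic ?cycle_id.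
Qed.

End CentralElementOfPrimeOrder.

End CyclicGraph.

Theorem lemma3p4 (gT : finGroupType) (G : {group gT}) :
  cyc_graph_connected G -> cyc_diam_gt G 6 -> ('Z(G) = 1)%g.
Proof.
move=> connG [x [y [xG yG far_xy]]].
have [// | ntZ] := eqVneq 'Z(G) 1; case: far_xy.
have p_pr : prime (pdiv #|'Z(G)|) by rewrite pdiv_prime ?cardG_gt1.
have [z zZ oz] := Cauchy p_pr (pdiv_dvd #|'Z(G)|).
have near_z := cyc_dist_le3_central p_pr zZ oz connG.
exact: (cyc_dist_le_cat (near_z x xG) (cyc_dist_le_sym (near_z y yG))).
Qed.
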